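(* Let $F$ be a Legendre function whose domain is a closed convex cone $\mathcal{K}\supseteq\mathbb{R}^d_{\ge0}$ with $\mathrm{int}(\mathcal{K})\supseteq\mathbb{R}^d_{++}$, and assume that for any $p,q\in\mathcal{K}$ and weights $\lambda_1,\lambda_2>0$, the point $c^*$ defined by $\nabla F(c^* )=\frac{\lambda_1\nabla F(p)+\lambda_2\nabla F(q)}{\lambda_1+\lambda_2}$ lies in $\mathcal{K}$. Then for any $\pi_0\in\Pi_{\mathrm{all}}$, the direct projection $\widehat\pi=\arg\min_{\pi\in\Pi\cap\mathcal{C}_{\mathrm{coh}}}\mathsf{B}(\pi\parallel\pi_0)$ coincides with the two-step projection $\widehat{\widehat\pi}=\arg\min_{\pi\in\Pi\cap\mathcal{C}_{\mathrm{coh}}}\mathsf{B}(\pi\parallel\overline\pi)$, where $\overline\pi=\arg\min_{\pi\in\mathcal{C}^\dagger_{\mathrm{coh}}}\mathsf{B}(\pi\parallel\pi_0)$.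
   Context: $\mathcal{X},\mathcal{Y}$ finite, $d=|\mathcal{Y}|$; $\Pi_{\mathrm{all}}=\Delta(\mathcal{Y})^{\mathcal{X}}$; $\Pi\subseteq\Pi_{\mathrm{all}}$ closed convex; $\Pi^\dagger_{\mathrm{all}}=\mathcal{K}^{\mathcal{X}}$. $\mathcal{D}_{\mathcal{X}}$ a full-support distribution on $\mathcal{X}$; $\Phi\colon\mathcal{X}\to\mathcal{X}$ an involution; $\mathcal{C}^{\dagger\dagger}_{\mathrm{coh}}=\{\pi\colon\mathcal{X}\to\mathbb{R}^d:\pi(x)=\pi(\Phi(x))\ \forall x\}$, $\mathcal{C}^\dagger_{\mathrm{coh}}=\mathcal{C}^{\dagger\dagger}_{\mathrm{coh}}\cap\Pi^\dagger_{\mathrm{all}}$, $\mathcal{C}_{\mathrm{coh}}=\mathcal{C}^\dagger_{\mathrm{coh}}\cap\Pi_{\mathrm{all}}$. For models, $\mathsf{B}(\pi\parallel\pi')=\mathbb{E}_{x\sim\mathcal{D}_{\mathcal{X}}}[\mathsf{B}_F(\pi(x)\parallel\pi'(x))]$ with $\mathsf{B}_F(p\parallel q)=F(p)-F(q)-\langle\nabla F(q),p-q\rangle$. A Legendre function is proper, closed, convex, differentiable on the interior $\Omega$ of its domain, with $\nabla F\colon\Omega\to\mathrm{int}(\mathrm{dom}F^* )$ a bijection. *)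

From HB Require Import structures.
From mathcomp Require Import all_boot all_order all_algebra.
From mathcomp Require Import all_classical all_reals all_analysis.
Set Implicit Arguments. Unset Strict Implicit. Unset Printing Implicit Defensive.
Import Order.TTheory GRing.Theory Num.Theory.
Import numFieldNormedType.Exports.
Local Open Scope classical_set_scope.
Local Open Scope ring_scope.

Section Defs.
Variables (R : realType) (d : nat).
Notation V := 'rV[R]_d.

Definition inner (a b : V) : R := \sum_(i < d) a 0 i * b 0 i.

(* Gradient of F at q, as the row vector of partial derivatives
   (meaningful where F is differentiable). *)
Definition gradF (F : V -> R) (q : V) : V :=
  \row_(i < d) ('d F q : V -> R) (delta_mx 0 i).

Definition bregF (F : V -> R) (p q : V) : R :=
  F p - F q - inner (gradF F q) (p - q).

Definition convex_vset (K : set V) : Prop :=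
  forall x y (t : R), K x -> K y -> 0 <= t <= 1 -> K (t *: x + (1 - t) *: y).

Definition cone (K : set V) : Prop :=
  forall x (t : R), K x -> 0 <= t -> K (t *: x).

Definition nonneg_orthant : set V := [set x | forall i, 0 <= x 0 i].
Definition pos_orthant : set V := [set x | forall i, 0 < x 0 i].

(* Probability simplex Delta(Y), Y identified with 'I_d. *)
Definition simplex : set V :=
  [set x | (forall i, 0 <= x 0 i) /\ \sum_(i < d) x 0 i = 1].

(* A function F with effective domain K (F = +oo outside K). *)
Definition conj_dom (F : V -> R) (K : set V) : set V :=
  [set y | exists M : R, forall x, K x -> inner y x - F x <= M].

Definition Legendre (F : V -> R) (K : set V) : Prop :=
  [/\ K !=set0,
      convex_vset K /\
        (forall x y (t : R), K x -> K y -> 0 <= t <= 1 ->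
           F (t *: x + (1 - t) *: y) <= t * F x + (1 - t) * F y),
      closed [set z : V * R | K z.1 /\ F z.1 <= z.2],
      (forall x, interior K x -> differentiable F x) &
      set_bij (interior K) (interior (conj_dom F K)) (gradF F)].

Definition cstar_in_dom (F : V -> R) (K : set V) : Prop :=
  forall p q (l1 l2 : R), interior K p -> interior K q -> 0 < l1 -> 0 < l2 ->
    exists c, [/\ K c, differentiable F c &
      gradF F c = (l1 + l2)^-1 *: (l1 *: gradF F p + l2 *: gradF F q)].

Variable X : finType.
Local Notation model := (X -> V).

(* Closedness of a set of models, for the (pointwise = product = Euclidean,
   X being finite) topology on X -> R^d. *)
Definition closed_models (P : set model) : Prop :=
  closed (P : set {ptws X -> V}).

Definition convex_models (P : set model) : Prop :=
  forall f g (t : R), P f -> P g -> 0 <= t <= 1 ->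
    P (fun x => t *: f x + (1 - t) *: g x).

Definition Pi_all : set model := [set pi | forall x, simplex (pi x)].
Definition Pi_dag_all (K : set V) : set model := [set pi | forall x, K (pi x)].
Definition C_coh_dd (Phi : X -> X) : set model :=
  [set pi | forall x, pi x = pi (Phi x)].
Definition C_coh_d (Phi : X -> X) (K : set V) : set model :=
  C_coh_dd Phi `&` Pi_dag_all K.
Definition C_coh (Phi : X -> X) (K : set V) : set model :=
  C_coh_d Phi K `&` Pi_all.

(* B(pi || pi') = E_{x ~ D_X} B_F(pi x || pi' x), D_X given by weights w. *)
Definition Bdiv (w : X -> R) (F : V -> R) (pi pi' : model) : R :=
  \sum_(x : X) w x * bregF F (pi x) (pi' x).

Definition is_argmin (S : set model) (f : model -> R) (m : model) : Prop :=
  S m /\ forall pi, S pi -> f m <= f pi.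

Definition argmin (S : set model) (f : model -> R) : set model :=
  [set m | is_argmin S f m].

End Defs.

From HB Require Import structures.
From mathcomp Require Import all_boot all_order all_algebra.
From mathcomp Require Import all_classical all_reals all_analysis.
From mathcomp Require Import ring lra.
Set Implicit Arguments. Unset Strict Implicit. Unset Printing Implicit Defensive.
Import Order.TTheory GRing.Theory Num.Theory.
Import numFieldNormedType.Exports.
Local Open Scope classical_set_scope.
Local Open Scope ring_scope.

(* On a coherent model p (p x = p (Phi x) for all x) the linear part of B(p || q)
   only sees the w-weighted average gbar x of grad F (q x) and grad F (q (Phi x)):
     B(p || q) = sum_x w x (F (p x) - <gbar x, p x>) + const(q).
   As grad F maps int K bijectively onto the convex set int dom F^*, gbar = grad F o c
   for some c with values in int K, coherent by injectivity of grad F.  Each summand is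
   minimised exactly at c x, uniquely since grad F is injective, so c is the unique
   projection of pi0 onto C^dag_coh.  For q = c the average gbar is grad F o c again,
   so B(. || pi0) and B(. || c) differ by a constant on coherent models and have the
   same minimisers over Pi /\ C_coh. *)

Section Gradient.
Variables (R : realType) (d : nat).
Local Notation V := 'rV[R]_d.
Implicit Types (F : V -> R) (K : set V) (g v y z : V).

Lemma innerDl (a b c : V) : inner (a + b) c = inner a c + inner b c.
Proof. by rewrite /inner -big_split; apply: eq_bigr => i _; rewrite mxE mulrDl. Qed.

Lemma innerDr (a b c : V) : inner c (a + b) = inner c a + inner c b.
Proof. by rewrite /inner -big_split; apply: eq_bigr => i _; rewrite mxE mulrDr. Qed.

Lemma innerZl (t : R) (a c : V) : inner (t *: a) c = t * inner a c.
Proof. by rewrite /inner mulr_sumr; apply: eq_bigr => i _; rewrite mxE mulrA. Qed.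

Lemma innerZr (t : R) (a c : V) : inner c (t *: a) = t * inner c a.
Proof. by rewrite /inner mulr_sumr; apply: eq_bigr => i _; rewrite mxE mulrCA. Qed.

Lemma innerNr (a c : V) : inner c (- a) = - inner c a.
Proof. by rewrite -scaleN1r innerZr mulN1r. Qed.

Lemma innerBr (a b c : V) : inner c (a - b) = inner c a - inner c b.
Proof. by rewrite innerDr innerNr. Qed.

Lemma inner_delta g i : inner g (delta_mx 0 i) = g 0 i.
Proof.
rewrite /inner (bigD1 i) //= big1 => [|j /negbTE ji].
  by rewrite mxE !eqxx mulr1 addr0.
by rewrite mxE ji andbF mulr0.
Qed.

Lemma inner_gradF F z v : inner (gradF F z) v = 'd F z v.
Proof.
rewrite [in RHS](row_sum_delta v) linear_sum; apply: eq_bigr => i _.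
by rewrite linearZ /= mxE mulrC.
Qed.

Lemma gradF_inner F z g : (forall v, 'd F z v = inner g v) -> gradF F z = g.
Proof. by move=> dFg; apply/rowP => i; rewrite mxE dFg inner_delta. Qed.

Lemma diff_quotient_cvg F z v : differentiable F z ->
  (fun s : R => s^-1 * (F (s *: v + z) - F z)) @ 0^'+ --> 'd F z v.
Proof.
move=> dF; rewrite -deriveE //; apply: cvg_trans (diff_derivable (v := v) dF).
apply: cvg_app => A [e e_gt0 eA]; exists e => // s /= se s_gt0.
by apply: eA; rewrite //= gt_eqF.
Qed.

Lemma interior_line_near K z v :
  interior K z -> \forall s \near (0 : R), interior K (s *: v + z).
Proof.
move=> Kz; have line_cvg : (fun s : R => s *: v + z) @ 0 --> z.
  rewrite -[X in _ --> X]add0r -(scale0r v).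
  by apply: cvgD; [apply: cvgZ; [exact: cvg_id | exact: cvg_cst] | exact: cvg_cst].
exact: line_cvg _ (nbhs_interior Kz).
Qed.

Definition convex_on K F := forall x y (t : R), K x -> K y -> 0 <= t <= 1 ->
  F (t *: x + (1 - t) *: y) <= t * F x + (1 - t) * F y.

Definition tilt F g y := F y - inner g y.

Lemma gradF_subgradient K F z y : convex_on K F -> K z -> K y ->
  differentiable F z -> inner (gradF F z) (y - z) <= F y - F z.
Proof.
move=> cvxF Kz Ky dF; rewrite inner_gradF.
apply: cvgr_to_le (diff_quotient_cvg (v := y - z) dF) _.
near=> s; have s_gt0 : 0 < s by near: s; exact: nbhs_right_gt.
have s_lt1 : s < 1 by near: s; exact: nbhs_right_lt.
have -> : s *: (y - z) + z = s *: y + (1 - s) *: z.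
  by rewrite scalerBr scalerBl scale1r addrAC addrA.
rewrite ler_pdivrMl // lerBlDr.
apply: le_trans (cvxF _ _ _ Ky Kz _) _; first by rewrite !ltW.
by rewrite mulrBr mulrBl mul1r addrA addrAC.
Unshelve. all: by end_near.
Qed.

Lemma tilt_min_gradF K F z y : convex_on K F -> K z -> K y -> differentiable F z ->
  tilt F (gradF F z) z <= tilt F (gradF F z) y.
Proof.
move=> cvxF Kz Ky dF; have := gradF_subgradient cvxF Kz Ky dF.
by rewrite /tilt innerBr; lra.
Qed.

Lemma gradF_tilt_min K F g z : interior K z -> differentiable F z ->
  (forall y, K y -> tilt F g z <= tilt F g y) -> gradF F z = g.
Proof.
move=> Kz dF zmin; apply: gradF_inner.
suff ge v : inner g v <= 'd F z v.
  by move=> v; apply/eqP; rewrite eq_le ge andbT -lerN2 -innerNr -linearN ge.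
apply: cvgr_to_ge (diff_quotient_cvg (v := v) dF) _.
have Kline : \forall s \near 0^'+, interior K (s *: v + z).
  by apply: cvg_within; exact: interior_line_near.
near=> s; have s_gt0 : 0 < s by near: s; exact: nbhs_right_gt.
have /zmin : K (s *: v + z) by apply: interior_subset; near: s; exact: Kline.
by rewrite /tilt innerDr innerZr ler_pdivlMl //; lra.
Unshelve. all: by end_near.
Qed.

Lemma tilt_min_unique K F z y : convex_on K F -> interior K z ->
  (forall x, interior K x -> differentiable F x) ->
  set_inj (interior K) (gradF F) -> K y ->
  tilt F (gradF F z) y <= tilt F (gradF F z) z -> y = z.
Proof.
move=> cvxF Kz dF gradF_inj Ky ymin; set g := gradF F z.
have zmin x : K x -> tilt F g z <= tilt F g x.
  by move=> Kx; apply: tilt_min_gradF (interior_subset Kz) Kx (dF _ Kz).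
have : \forall t \near (0 : R)^'+, [/\ 0 < t, t <= 1 & interior K (t *: (y - z) + z)].
  near=> t; split; near: t; [exact: nbhs_right_gt | exact: nbhs_right_le |].
  exact: cvg_within (interior_line_near (y - z) Kz).
move=> /filter_ex [t [t_gt0 t_le1 Kt]].
have tmin : tilt F g (t *: (y - z) + z) <= tilt F g z.
  have segE : t *: (y - z) + z = t *: y + (1 - t) *: z.
    by rewrite scalerBr scalerBl scale1r addrAC addrA.
  have := cvxF _ _ t Ky (interior_subset Kz).
  rewrite (ltW t_gt0) t_le1 -segE => /(_ isT).
  move: ymin => /(ler_wpM2l (ltW t_gt0)).
  by rewrite /tilt segE innerDr !innerZr; lra.
have gradt : gradF F (t *: (y - z) + z) = g.
  apply: gradF_tilt_min Kt (dF _ Kt) _ => x Kx.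
  exact: le_trans tmin (zmin x Kx).
move: (gradF_inj _ _ (mem_set Kt) (mem_set Kz) gradt) => /(canRL (addrK z)).
by rewrite subrr => /eqP; rewrite scaler_eq0 (gt_eqF t_gt0) subr_eq0 => /eqP.
Unshelve. all: by end_near.
Qed.

Lemma conj_dom_convex F K : convex_vset (conj_dom F K).
Proof.
move=> a b t [Ma Ha] [Mb Hb] /andP [t_ge0 t_le1].
exists (t * Ma + (1 - t) * Mb) => x Kx.
have t'_ge0 : 0 <= 1 - t by rewrite subr_ge0.
have := ler_wpM2l t_ge0 (Ha x Kx); have := ler_wpM2l t'_ge0 (Hb x Kx).
by rewrite innerDl !innerZl; lra.
Qed.

Lemma interior_convex K : convex_vset K -> convex_vset (interior K).
Proof.
move=> cvxK a b t Ka Kb t01; set m : V := t *: a + (1 - t) *: b.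
have shift_cvg c : (fun u => c + (u - m)) @ m --> c.
  rewrite -[X in _ --> X]addr0 -(subrr m).
  apply: (cvgD (F := nbhs m)); first exact: cvg_cst.
  by apply: cvgB; [exact: cvg_id | exact: cvg_cst].
suff : \forall u \near m, K u by [].
near=> u.
have shiftE (du : V) : t *: (a + du) + (1 - t) *: (b + du) = m + du.
  by rewrite !scalerDr addrACA -scalerDl addrCA subrr addr0 scale1r.
have -> : u = t *: (a + (u - m)) + (1 - t) *: (b + (u - m)).
  by rewrite shiftE addrC subrK.
by apply: cvxK => //; near: u; [exact: shift_cvg Ka | exact: shift_cvg Kb].
Unshelve. all: by end_near.
Qed.

End Gradient.

Lemma argmin_shift (R : realType) d (X : finType) (S : set (X -> 'rV[R]_d))
    (f g : (X -> 'rV[R]_d) -> R) (C : R) :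
  (forall p, S p -> f p - g p = C) -> argmin S f = argmin S g.
Proof.
move=> fgC; have fE p : S p -> f p = g p + C.
  by move=> Sp; rewrite -(fgC p Sp) addrC subrK.
apply/seteqP; split=> m [Sm m_min]; split=> // p Sp;
  by have := m_min p Sp; rewrite !fE // lerD2r.
Qed.

Section Symmetrization.
Variables (R : realType) (d : nat) (X : finType) (w : X -> R) (Phi : X -> X).
Hypotheses (w_gt0 : forall x, 0 < w x) (Phi_inv : involutive Phi).
Local Notation V := 'rV[R]_d.
Implicit Types (G p q : X -> V) (F : V -> R).

Lemma weighted_sum_le_eq (a b : X -> R) : (forall x, a x <= b x) ->
  \sum_x w x * b x <= \sum_x w x * a x -> forall x, b x = a x.
Proof.
move=> ab; rewrite -subr_le0 -sumrB => sum_le0.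
have terms_ge0 x : true -> 0 <= w x * b x - w x * a x.
  by move=> _; rewrite -mulrBr; apply: mulr_ge0; [exact: ltW | rewrite subr_ge0].
have sum0 : \sum_x (w x * b x - w x * a x) = 0.
  by apply/eqP; rewrite eq_le sum_le0 sumr_ge0.
move=> x; have /eqP := psumr_eq0P terms_ge0 sum0 (i := x) isT.
by rewrite -mulrBr mulf_eq0 gt_eqF //= subr_eq0 => /eqP.
Qed.

Lemma sum_Phi (f : X -> R) : \sum_x f (Phi x) = \sum_x f x.
Proof. by rewrite [RHS](reindex_inj (inv_inj Phi_inv)). Qed.

Definition sym_avg G x : V :=
  (w x + w (Phi x))^-1 *: (w x *: G x + w (Phi x) *: G (Phi x)).

Lemma w_sym_neq0 x : w x + w (Phi x) != 0.
Proof. by rewrite gt_eqF // addr_gt0. Qed.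

Lemma sym_avg_coh G : C_coh_dd Phi (sym_avg G).
Proof. by move=> x; rewrite /sym_avg Phi_inv addrC [w (Phi x) *: _ + _]addrC. Qed.

Lemma sym_avg_id G : C_coh_dd Phi G -> sym_avg G = G.
Proof.
move=> G_coh; apply: funext => x.
by rewrite /sym_avg -G_coh -scalerDl scalerA mulVf ?w_sym_neq0 ?scale1r.
Qed.

Lemma sym_avg_convex (S : set V) G : convex_vset S -> (forall x, S (G x)) ->
  forall x, S (sym_avg G x).
Proof.
move=> cvxS SG x; set l := w x / (w x + w (Phi x)).
have wsum_gt0 : 0 < w x + w (Phi x) by rewrite addr_gt0.
have -> : sym_avg G x = l *: G x + (1 - l) *: G (Phi x).
  have -> : 1 - l = w (Phi x) / (w x + w (Phi x)).
    by rewrite -[X in X - _](divff (w_sym_neq0 x)) -mulrBl addrAC subrr add0r.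
  by rewrite /sym_avg scalerDr !scalerA !(mulrC _^-1).
apply: cvxS => //; apply/andP; split.
  by rewrite divr_ge0 // ltW.
by rewrite ler_pdivrMr // mul1r lerDl ltW.
Qed.

Lemma sum_inner_sym_avg G p : C_coh_dd Phi p ->
  \sum_x w x * inner (G x) (p x) = \sum_x w x * inner (sym_avg G x) (p x).
Proof.
move=> p_coh; apply: (@pmulrnI _ 2) => //.
have dbl (f : X -> R) : (\sum_x f x) *+ 2 = \sum_x (f x + f (Phi x)).
  by rewrite mulr2n -[X in _ + X = _]sum_Phi big_split.
rewrite !dbl; apply: eq_bigr => x _; rewrite -p_coh -sym_avg_coh -mulrDl.
by rewrite /sym_avg innerZl mulrA mulfV ?w_sym_neq0 // mul1r innerDl !innerZl.
Qed.

Lemma Bdiv_coh F p q : C_coh_dd Phi p ->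
  Bdiv w F p q = \sum_x w x * tilt F (sym_avg (fun x => gradF F (q x)) x) (p x)
    + \sum_x w x * (inner (gradF F (q x)) (q x) - F (q x)).
Proof.
move=> p_coh; have tilt_sum (H : X -> V) : \sum_x w x * tilt F (H x) (p x) =
    \sum_x w x * F (p x) - \sum_x w x * inner (H x) (p x).
  by rewrite -sumrB; apply: eq_bigr => x _; rewrite /tilt mulrBr.
rewrite tilt_sum -sum_inner_sym_avg // -tilt_sum /Bdiv -big_split /=.
by apply: eq_bigr => x _; rewrite /bregF /tilt innerBr; ring.
Qed.

Variables (F : V -> R) (K : set V).
Hypotheses (cvxF : convex_on K F) (dF : forall y, interior K y -> differentiable F y).
Hypothesis gradF_bij : set_bij (interior K) (interior (conj_dom F K)) (gradF F).

Lemma exists_gradF_sym_avg q : (forall x, interior K (q x)) ->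
  exists2 c : X -> V, forall x, interior K (c x) &
    forall x, gradF F (c x) = sym_avg (fun x => gradF F (q x)) x.
Proof.
case: gradF_bij => gradF_fun _ gradF_surj q_int.
suff /choice[c /all_and2[c_int gradF_c]] : forall x, exists c,
    interior K c /\ gradF F c = sym_avg (fun x => gradF F (q x)) x by exists c.
move=> x.
have avg_int : interior (conj_dom F K) (sym_avg (fun x => gradF F (q x)) x).
  apply: sym_avg_convex => [|y]; first exact/interior_convex/conj_dom_convex.
  exact: gradF_fun (q_int y).
by have [c c_int gradF_c] := gradF_surj _ avg_int; exists c.
Qed.

Variables (g c : X -> V).
Hypothesis c_int : forall x, interior K (c x).
Hypothesis gradF_c : forall x, gradF F (c x) = g x.

Lemma coh_of_gradF_coh : C_coh_dd Phi g -> C_coh_dd Phi c.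
Proof.
case: gradF_bij => _ gradF_inj _ g_coh x.
apply: (gradF_inj _ _ (mem_set (c_int x)) (mem_set (c_int (Phi x)))).
by rewrite !gradF_c g_coh.
Qed.

Lemma Bdiv_coh_gradF p : C_coh_dd Phi p -> C_coh_dd Phi c ->
  Bdiv w F p c = \sum_x w x * tilt F (g x) (p x)
    + \sum_x w x * (inner (g x) (c x) - F (c x)).
Proof.
move=> p_coh c_coh; rewrite Bdiv_coh // sym_avg_id => [|x]; last by rewrite -c_coh.
by under eq_bigr do rewrite gradF_c; under [X in _ + X]eq_bigr do rewrite gradF_c.
Qed.

Lemma tilt_sum_min p : Pi_dag_all K p ->
  \sum_x w x * tilt F (g x) (c x) <= \sum_x w x * tilt F (g x) (p x).
Proof.
move=> pK; apply: ler_sum => x _; apply: ler_wpM2l; first exact: ltW.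
rewrite -gradF_c.
exact: tilt_min_gradF cvxF (interior_subset (c_int x)) (pK x) (dF (c_int x)).
Qed.

Lemma tilt_sum_min_unique p : Pi_dag_all K p ->
  \sum_x w x * tilt F (g x) (p x) <= \sum_x w x * tilt F (g x) (c x) -> p = c.
Proof.
case: gradF_bij => _ gradF_inj _ pK /weighted_sum_le_eq p_min; apply: funext => x.
apply: (tilt_min_unique cvxF (c_int x) dF gradF_inj (pK x)).
rewrite gradF_c p_min // => y; rewrite -gradF_c.
exact: tilt_min_gradF cvxF (interior_subset (c_int y)) (pK y) (dF (c_int y)).
Qed.

End Symmetrization.

Unset Implicit Arguments. Set Strict Implicit.
Theorem theorem13 (R : realType) (X : finType) (d : nat)
    (w : X -> R) (Phi : X -> X) (F : 'rV[R]_d -> R) (K : set 'rV[R]_d)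
    (Pi : set (X -> 'rV[R]_d)) (pi0 : X -> 'rV[R]_d) :
  (forall x, 0 < w x) -> \sum_(x : X) w x = 1 ->
  involutive Phi ->
  closed K -> convex_vset K -> cone K ->
  @nonneg_orthant R d `<=` K -> @pos_orthant R d `<=` interior K ->
  Legendre F K -> cstar_in_dom F K ->
  closed_models Pi -> convex_models Pi -> Pi `<=` @Pi_all R d X ->
  @Pi_all R d X pi0 -> (forall x, interior K (pi0 x)) ->
  (exists pibar, is_argmin (C_coh_d Phi K) (fun pi => Bdiv w F pi pi0) pibar) /\
  (forall pibar, is_argmin (C_coh_d Phi K) (fun pi => Bdiv w F pi pi0) pibar ->
     argmin (Pi `&` C_coh Phi K) (fun pi => Bdiv w F pi pi0) =
     argmin (Pi `&` C_coh Phi K) (fun pi => Bdiv w F pi pibar)).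
Proof.
move=> w_gt0 _ Phi_inv _ _ _ _ _ [_ [_ cvxF] _ dF gradF_bij] _ _ _ _ _ pi0_int.
have [c c_int gradF_c] := exists_gradF_sym_avg Phi w_gt0 gradF_bij pi0_int.
have c_coh : C_coh_dd Phi c.
  by apply: (coh_of_gradF_coh gradF_bij c_int gradF_c); exact: sym_avg_coh.
have c_min : is_argmin (C_coh_d Phi K) (fun pi => Bdiv w F pi pi0) c.
  split=> [|p [p_coh pK]]; first by split=> // x; exact: interior_subset.
  rewrite !(Bdiv_coh w_gt0 Phi_inv) // lerD2r.
  exact: (tilt_sum_min w_gt0 cvxF dF c_int gradF_c pK).
split; first by exists c.
move=> pb [[pb_coh pbK] pb_min]; have -> : pb = c.
  apply: (tilt_sum_min_unique w_gt0 cvxF dF gradF_bij c_int gradF_c pbK).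
  by have := pb_min c c_min.1; rewrite !(Bdiv_coh w_gt0 Phi_inv) // lerD2r.
apply: argmin_shift => p [_ [[p_coh _] _]].
rewrite (Bdiv_coh w_gt0 Phi_inv) // (Bdiv_coh_gradF w_gt0 Phi_inv gradF_c) //.
by rewrite opprD addrACA subrr add0r.
Qed.
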